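(* Let $\mu^*\in\mathbb{R}^{p\times K}$ and $L^*\in\mathcal{L}_K$ with $|\mathrm{supp}(\mu^* )|\le s$, $\min_{k\ne k'}\|\mu^*_k-\mu^*_{k'}\|_2\ge c_0$ and $\|\mu^*(L^* )^T\|_F^2\le C_0sn$ for constants $c_0,C_0>0$. Let $$\widetilde{\Theta}_K=\left\{\frac{\mu L^T-\mu^*(L^* )^T}{\|\mu L^T-\mu^*(L^* )^T\|_F}:\ \mu\in\mathbb{R}^{p\times K},\ |\mathrm{supp}(\mu)|\le s,\ L\in\mathcal{L}_K,\ \mu L^T\neq\mu^*(L^* )^T\right\}.$$ Then there is a constant $C>0$ (depending only on $c_0,C_0$) such that for all $\epsilon\in(0,2]$, $$\log N(\epsilon,\widetilde{\Theta}_K,\|\cdot\|_F)\le C\left(n\log K+s\log\frac{p}{s}+sK\log n+sK\log\frac{6}{\epsilon}\right),$$ where $N(\epsilon,\cdot,\|\cdot\|_F)$ is the $\epsilon$-covering number with respect to the Frobenius norm.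
   Context: $\mathcal{L}_K$ is the set of $n\times K$ matrices $L=[l_1,\dots,l_n]^T$ with each row $l_i\in\{0,1\}^K$ having exactly one entry equal to $1$ (cluster-assignment matrices). For $\mu=[\mu_1,\dots,\mu_K]\in\mathbb{R}^{p\times K}$, $\mathrm{supp}(\mu)$ is the set of indices of the nonzero rows of $\mu$. Here $n\ge 2$, $K\ge 2$ and $1\le s\le p$. *)

From HB Require Import structures.
From mathcomp Require Import all_boot all_order all_algebra.
From mathcomp Require Import all_classical all_reals all_analysis.
Set Implicit Arguments. Unset Strict Implicit. Unset Printing Implicit Defensive.
Import Order.TTheory GRing.Theory Num.Theory.
Local Open Scope classical_set_scope.
Local Open Scope ring_scope.

Definition frob (R : realType) (m n : nat) (A : 'M[R]_(m, n)) : R :=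
  Num.sqrt (\sum_(i < m) \sum_(j < n) A i j ^+ 2).

Definition is_assign (R : realType) (n K : nat) (L : 'M[R]_(n, K)) : Prop :=
  forall i : 'I_n, exists k : 'I_K, forall k' : 'I_K, L i k' = (k' == k)%:R.

Definition supp (R : realType) (p K : nat) (mu : 'M[R]_(p, K)) : {set 'I_p} :=
  [set i | row i mu != 0].

Definition coldist (R : realType) (p K : nat) (mu : 'M[R]_(p, K)) (k k' : 'I_K) : R :=
  frob (col k mu - col k' mu).

Definition ThetaK (R : realType) (p n K s : nat) (mus : 'M[R]_(p, K)) (Ls : 'M[R]_(n, K))
  : set 'M[R]_(p, n) :=
  [set M | exists (mu : 'M[R]_(p, K)) (L : 'M[R]_(n, K)),
      [/\ (#|supp mu| <= s)%N, is_assign L, mu *m L^T != mus *m Ls^T &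
          M = (frob (mu *m L^T - mus *m Ls^T))^-1 *: (mu *m L^T - mus *m Ls^T)]].

Definition covering_number (R : realType) (m n : nat) (eps : R) (S : set 'M[R]_(m, n))
  : \bar R :=
  ereal_inf [set ((size F)%:R)%:E | F in
     [set F : seq 'M[R]_(m, n) |
        (forall x, x \in F -> S x) /\
        (forall M, S M -> exists2 x, x \in F & frob (M - x) <= eps)]].

From HB Require Import structures.
From mathcomp Require Import all_boot all_order all_algebra.
From mathcomp Require Import all_classical all_reals all_analysis.
From mathcomp Require Import ring lra.
Set Implicit Arguments. Unset Strict Implicit. Unset Printing Implicit Defensive.
Import Order.TTheory GRing.Theory Num.Theory.
Local Open Scope classical_set_scope.
Local Open Scope ring_scope.

(* Let f be the cluster map of L and write M0 for mu* L*^T.  An element of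
   Theta~_K is t (mu L^T - M0) with t the inverse Frobenius norm of the
   difference.  Let C be M0 minus its row-wise means over the clusters of f.
   The (i, j) entry of the element is lam_{i, f j} - t C_{ij}, where
   lam = t (mu - cluster means of M0), and as C is orthogonal to every matrix
   constant on clusters,
     sum_{i,k} a_{ik}^2 + tau^2 = 1,  a_{ik} = sqrt(n_k) lam_{ik},  tau = t ||C||_F,
   with a having at most 2s nonzero rows.  Rounding a and tau to the grid
   delta Z, delta ~ eps / sqrt(sK), moves the point by at most eps / 2.  Hence
   the covering number is at most K^n (choices of f) times 1/delta (choices of
   tau) times the number of integer p x K matrices with at most 2s nonzero rows
   and squared norm at most 1/delta^2, which Rankin's trick bounds by
   exp(s + sK + 2s log(p/s) + 8sK log(6/eps)). *)

Section FrobeniusSquare.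
Variable R : realType.

Definition sqfrob (a b : nat) (A : 'M[R]_(a, b)) : R := \sum_i \sum_j A i j ^+ 2.

Lemma sqfrob_ge0 a b (A : 'M[R]_(a, b)) : 0 <= sqfrob A.
Proof. by apply: sumr_ge0 => i _; apply: sumr_ge0 => j _; apply: sqr_ge0. Qed.

Lemma frob_sqr a b (A : 'M[R]_(a, b)) : frob A ^+ 2 = sqfrob A.
Proof. by rewrite /frob sqr_sqrtr // sqfrob_ge0. Qed.

Lemma frob_le a b (A : 'M[R]_(a, b)) e : 0 <= e -> sqfrob A <= e ^+ 2 -> frob A <= e.
Proof.
by move=> e0 h; rewrite /frob -(ger0_norm e0) -sqrtr_sqr ler_sqrt ?sqr_ge0.
Qed.

Lemma sqfrob_eq0 a b (A : 'M[R]_(a, b)) : sqfrob A = 0 -> A = 0.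
Proof.
move=> /eqP; rewrite psumr_eq0 => [/allP A0|i _]; last first.
  by apply: sumr_ge0 => j _; apply: sqr_ge0.
apply/matrixP => i j; move: (A0 i (mem_index_enum i)).
rewrite psumr_eq0 => [/allP /(_ j (mem_index_enum j))|j' _]; last exact: sqr_ge0.
by rewrite sqrf_eq0 mxE => /eqP.
Qed.

Lemma frob_eq0 a b (A : 'M[R]_(a, b)) : (frob A == 0) = (A == 0).
Proof.
apply/eqP/eqP => [|->].
  by move=> /(congr1 (fun x => x ^+ 2)); rewrite frob_sqr expr0n => /sqfrob_eq0.
by rewrite /frob big1 ?sqrtr0 // => i _; rewrite big1 // => j _; rewrite mxE expr0n.
Qed.

Lemma sqfrobZ a b x (A : 'M[R]_(a, b)) : sqfrob (x *: A) = x ^+ 2 * sqfrob A.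
Proof.
rewrite /sqfrob mulr_sumr; apply: eq_bigr => i _; rewrite mulr_sumr.
by apply: eq_bigr => j _; rewrite mxE exprMn.
Qed.

Lemma sqfrob_normalize a b (Y : 'M[R]_(a, b)) :
  Y != 0 -> sqfrob ((frob Y)^-1 *: Y) = 1.
Proof.
move=> Y0; rewrite sqfrobZ exprVn frob_sqr mulVf //.
by apply: contra Y0 => /eqP /sqfrob_eq0 ->.
Qed.

Lemma sqfrobB_le a b (A B C : 'M[R]_(a, b)) :
  sqfrob (A - B) <= 2 * sqfrob (A - C) + 2 * sqfrob (B - C).
Proof.
rewrite /sqfrob !mulr_sumr -big_split /=; apply: ler_sum => i _.
rewrite !mulr_sumr -big_split /=; apply: ler_sum => j _.
rewrite !mxE; have := sqr_ge0 (A i j + B i j - 2 * C i j); nra.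
Qed.

(* The centres [g i] need not lie in [S]: each of them is replaced by a point
   of [S] in its [eps / 2]-ball, at the cost of a factor 2 in the radius. *)
Lemma covering_number_le_card a b (I : finType) (g : I -> 'M[R]_(a, b))
    (S : set 'M[R]_(a, b)) (eps : R) : 0 <= eps ->
  (forall M, S M -> exists i, sqfrob (M - g i) <= eps ^+ 2 / 4) ->
  (covering_number eps S <= (#|I|%:R)%:E)%E.
Proof.
move=> e0 Scov.
pose ball i := [set M | S M /\ sqfrob (M - g i) <= eps ^+ 2 / 4].
pose F := [seq xget 0 (ball i) | i <- enum I & `[< exists M, ball i M >]].
have Fball i : `[< exists M, ball i M >] -> ball i (xget 0 (ball i)).
  by move=> /asboolP [M bM]; apply: xgetI bM.
apply: (@le_trans _ _ ((size F)%:R)%:E); last first.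
  by rewrite lee_fin ler_nat size_map cardE size_filter count_size.
apply: ereal_inf_lbound; exists F => //; split.
  by move=> x /mapP [i]; rewrite mem_filter => /andP[/Fball [Sx _] _] ->.
move=> M SM; have [i Mi] := Scov M SM.
have iF : `[< exists M, ball i M >] by apply/asboolP; exists M.
exists (xget 0 (ball i)); first by apply: map_f; rewrite mem_filter iF mem_enum.
have [_ xi] := Fball i iF.
by apply: frob_le => //; apply: (le_trans (sqfrobB_le _ _ (g i))); lra.
Qed.

End FrobeniusSquare.

Section Codes.
Variables (R : realType) (p K m s r : nat).

(* An entry code [(j, b)] stands for the grid value [(-1)^b * j] (see [code_val]). *)
Definition entry_code := ('I_m.+1 * bool)%type.
Definition row_code := {ffun 'I_K -> entry_code}.
Definition mx_code := {ffun 'I_p -> row_code}.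
Definition row_code0 : row_code := [ffun => (ord0, false)].

Definition code_mag (e : entry_code) : nat := e.1.

Definition admissible_code (z : mx_code) : bool :=
  (#|[pred i | z i != row_code0]| <= s.*2)%N &&
  (\sum_i \sum_k code_mag (z i k) ^ 2 <= r)%N.

Definition theta_sum (q : R) : R := \sum_(e : entry_code) q ^+ (code_mag e ^ 2).

Lemma theta_sum_ge1 q : 0 <= q -> 1 <= theta_sum q.
Proof.
move=> q0; rewrite /theta_sum (bigD1 (ord0, false)) //= expr0 lerDl.
by apply: sumr_ge0 => e _; apply: exprn_ge0.
Qed.

Lemma theta_sum_le q : 0 <= q < 1 -> theta_sum q <= 2 / (1 - q).
Proof.
move=> /andP[q0 q1]; have q1' : 0 < 1 - q by rewrite subr_gt0.
rewrite /theta_sum -(pair_bigA _ (fun j b => q ^+ (code_mag (j, b) ^ 2))) /=.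
under eq_bigr do rewrite big_bool /=.
rewrite big_split /=.
suff geom_le : \sum_(j < m.+1) q ^+ (j ^ 2) <= (1 - q)^-1.
  by rewrite /code_mag /=; lra.
apply: (@le_trans _ _ (\sum_(j < m.+1) q ^+ j)).
  apply: ler_sum => j _; apply: ler_wiXn2l => //; first exact: ltW.
  by case: (nat_of_ord j) => // k; rewrite expnS expn1 leq_pmull.
have geom : (1 - q) * \sum_(j < m.+1) q ^+ j = 1 - q ^+ m.+1.
  by rewrite -opprB mulNr -subrX1 opprB.
rewrite -[(1 - q)^-1]mulr1 ler_pdivlMl // geom lerBlDr lerDl.
exact: exprn_ge0.
Qed.

Section Rankin.
Variables (q y : R).
Hypotheses (q0 : 0 < q) (q1 : q <= 1) (y0 : 0 < y) (y1 : y <= 1).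

Let row_weight (x : row_code) : R :=
  (if x == row_code0 then 1 else y) * \prod_k q ^+ (code_mag (x k) ^ 2).

Let row_weight_ge0 x : 0 <= row_weight x.
Proof.
rewrite /row_weight mulr_ge0 //; first by case: eqP => _; rewrite ?ler01 ?ltW.
by apply: prodr_ge0 => k _; rewrite exprn_ge0 // ltW.
Qed.

Let sum_row_weight_le : \sum_x row_weight x <= 1 + y * theta_sum q ^+ K.
Proof.
rewrite (bigD1 row_code0) //= {1}/row_weight eqxx mul1r.
rewrite big1 => [|k _]; last by rewrite ffunE expr0.
have -> : theta_sum q ^+ K = \sum_(x : row_code) \prod_k q ^+ (code_mag (x k) ^ 2).
  by rewrite -(bigA_distr_bigA (fun _ e => q ^+ (code_mag e ^ 2))) prodr_const card_ord.
rewrite lerD2l mulr_sumr [X in _ <= X](bigD1 row_code0) //=.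
rewrite ler_wpDl ?mulr_ge0 ?(ltW y0) ?prodr_ge0 // => [k _|].
  by rewrite exprn_ge0 // ltW.
by apply: ler_sum => x /negbTE x0; rewrite /row_weight x0.
Qed.

Let mx_weightE (z : mx_code) : \prod_i row_weight (z i) =
  y ^+ #|[pred i | z i != row_code0]| * q ^+ (\sum_i \sum_k code_mag (z i k) ^ 2).
Proof.
rewrite /row_weight big_split /= -prodr_const [in RHS]big_mkcond /=.
congr (_ * _); first by apply: eq_bigr => i _; rewrite inE; case: eqP.
by rewrite -prodrXr; apply: eq_bigr => i _; rewrite prodrXr.
Qed.

(* Rankin's trick: every admissible code has weight at least [q ^+ r * y ^+ s.*2],
   and the total weight factorizes over the rows. *)
Lemma card_admissible_code_le :
  #|[pred z | admissible_code z]|%:R <=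
    (1 + y * theta_sum q ^+ K) ^+ p / (q ^+ r * y ^+ s.*2).
Proof.
have w0 : 0 < q ^+ r * y ^+ s.*2 by rewrite mulr_gt0 // exprn_gt0.
rewrite -sum1_card natr_sum big_mkcond /=.
apply: (@le_trans _ _ (\sum_(z : mx_code) (\prod_i row_weight (z i)) / (q ^+ r * y ^+ s.*2))).
  apply: ler_sum => z _; rewrite mx_weightE.
  case: ifP => [/andP[card_z mag_z]|_]; last first.
    by rewrite divr_ge0 ?(ltW w0) // mulr_ge0 ?exprn_ge0 ?(ltW q0) ?(ltW y0).
  rewrite ler_pdivlMr // mul1r [X in _ <= X]mulrC.
  apply: ler_pM; rewrite ?exprn_ge0 ?(ltW q0) ?(ltW y0) //.
    exact: ler_wiXn2l (ltW q0) q1 _ _ mag_z.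
  exact: ler_wiXn2l (ltW y0) y1 _ _ card_z.
rewrite -mulr_suml; apply: ler_wpM2r; first by rewrite invr_ge0 ltW.
rewrite -(bigA_distr_bigA (fun _ x => row_weight x)) /= prodr_const card_ord.
have sum_ge0 : 0 <= \sum_x row_weight x by exact: sumr_ge0.
apply: lerXn2r; rewrite ?nnegrE //.
exact: le_trans sum_ge0 sum_row_weight_le.
Qed.

End Rankin.
End Codes.

Lemma mulmx_assignE (R : realType) p n K (A : 'M[R]_(p, K)) (L : 'M[R]_(n, K))
    (f : 'I_n -> 'I_K) :
  (forall j k, L j k = (k == f j)%:R) -> forall i j, (A *m L^T) i j = A i (f j).
Proof.
move=> Lf i j; rewrite !mxE (bigD1 (f j)) //= !mxE Lf eqxx mulr1 big1 ?addr0 //.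
by move=> k /negbTE fjk; rewrite !mxE Lf fjk mulr0.
Qed.

Lemma notin_supp_entry (R : realType) p K (A : 'M[R]_(p, K)) i k :
  i \notin supp A -> A i k = 0.
Proof.
by rewrite inE negbK => /eqP /(congr1 (fun v : 'rV_K => v 0 k)); rewrite !mxE.
Qed.

Section Clusters.
Variables (R : realType) (p n K : nat) (M : 'M[R]_(p, n)) (f : 'I_n -> 'I_K).

Definition clsize (k : 'I_K) : R := #|[pred j | f j == k]|%:R.
Definition clmean i k : R := (clsize k)^-1 * \sum_(j | f j == k) M i j.
Definition clcenter : 'M[R]_(p, n) := \matrix_(i, j) (M i j - clmean i (f j)).

Lemma clsize_gt0 j : 0 < clsize (f j).
Proof. by rewrite ltr0n; apply/card_gt0P; exists j; rewrite inE. Qed.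

Lemma sum_clusters (G : 'I_K -> R) : \sum_j G (f j) = \sum_k clsize k * G k.
Proof.
rewrite (partition_big f predT) //=; apply: eq_bigr => k _.
by rewrite (eq_bigr (fun => G k)) => [|j /eqP ->]; rewrite ?sumr_const ?mulr_natl.
Qed.

Lemma sum_clcenter i k : \sum_(j | f j == k) clcenter i j = 0.
Proof.
rewrite (eq_bigr (fun j => M i j - clmean i k)) => [|j /eqP <-]; last by rewrite mxE.
rewrite sumrB sumr_const -mulr_natl -/(clsize k) /clmean.
have [k0|k0] := eqVneq (clsize k) 0; last by rewrite mulrA mulfV ?mul1r ?subrr.
rewrite k0 mul0r subr0; apply: big_pred0 => j.
by apply/negbTE/negP => /eqP fjk; have := clsize_gt0 j; rewrite fjk k0 ltxx.
Qed.

(* Pythagoras: [clcenter] is orthogonal to every matrix that is constant on the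
   clusters of [f]. *)
Lemma sqfrob_cluster (lam : 'I_p -> 'I_K -> R) (t : R) :
  sqfrob (\matrix_(i, j) (lam i (f j) - t * clcenter i j)) =
    \sum_i \sum_k clsize k * lam i k ^+ 2 + t ^+ 2 * sqfrob clcenter.
Proof.
rewrite /sqfrob mulr_sumr -big_split /=; apply: eq_bigr => i _.
have orth : \sum_j lam i (f j) * clcenter i j = 0.
  rewrite (partition_big f predT) //= big1 // => k _.
  rewrite (eq_bigr (fun j => lam i k * clcenter i j)) => [|j /eqP -> //].
  by rewrite -mulr_sumr sum_clcenter mulr0.
have sqr_expand j : (lam i (f j) - t * clcenter i j) ^+ 2 =
    lam i (f j) ^+ 2 + t ^+ 2 * clcenter i j ^+ 2 - 2 * t * (lam i (f j) * clcenter i j).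
  by ring.
under eq_bigr => j _ do rewrite mxE sqr_expand.
rewrite sumrB big_split /= -!mulr_sumr orth mulr0 subr0.
by rewrite (sum_clusters (fun k => lam i k ^+ 2)).
Qed.

(* When [clcenter = 0] the junk value [tau / 0 = 0] makes the second term vanish. *)
Definition cluster_point (a : 'I_p -> 'I_K -> R) (tau : R) : 'M[R]_(p, n) :=
  \matrix_(i, j) (a i (f j) / Num.sqrt (clsize (f j)) - tau / frob clcenter * clcenter i j).

Lemma cluster_pointB a a' tau tau' :
  cluster_point a tau - cluster_point a' tau' =
    cluster_point (fun i k => a i k - a' i k) (tau - tau').
Proof. by apply/matrixP => i j; rewrite !mxE; ring. Qed.

Lemma sqfrob_cluster_point_le a tau :
  sqfrob (cluster_point a tau) <= \sum_i \sum_k a i k ^+ 2 + tau ^+ 2.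
Proof.
rewrite (sqfrob_cluster (fun i k => a i k / Num.sqrt (clsize k))) lerD //.
  apply: ler_sum => i _; apply: ler_sum => k _.
  have [->|k0] := eqVneq (clsize k) 0; first by rewrite mul0r sqr_ge0.
  have c0 : 0 <= clsize k by [].
  by rewrite expr_div_n sqr_sqrtr // mulrCA mulfV // mulr1.
rewrite -frob_sqr -exprMn; have [->|C0] := eqVneq (frob clcenter) 0.
  by rewrite mulr0 expr0n sqr_ge0.
by rewrite divfK.
Qed.

End Clusters.

Arguments clsize {R n K} f k.

Section Representation.
Variables (R : realType) (p n K : nat) (mu mus : 'M[R]_(p, K)) (L Ls : 'M[R]_(n, K)).
Variable f : 'I_n -> 'I_K.
Hypothesis Lf : forall j k, L j k = (k == f j)%:R.

Let Ms := mus *m Ls^T.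
Let Y := mu *m L^T - Ms.

Lemma normalized_diff_cluster_point : Y != 0 -> exists a tau,
  [/\ (frob Y)^-1 *: Y = cluster_point Ms f a tau, 0 <= tau,
      \sum_i \sum_k a i k ^+ 2 + tau ^+ 2 = 1 &
      forall i, i \notin supp mu :|: supp mus -> forall k, a i k = 0].
Proof.
move=> Y0; set t := (frob Y)^-1; set C := clcenter Ms f.
pose lam i k := t * (mu i k - clmean Ms f i k).
exists (fun i k => Num.sqrt (clsize f k) * lam i k), (t * frob C).
have tY : t *: Y = \matrix_(i, j) (lam i (f j) - t * C i j).
  apply/matrixP => i j; rewrite mxE [Y _ _]mxE [(- Ms) _ _]mxE (mulmx_assignE mu Lf).
  by rewrite [RHS]mxE /C [clcenter _ _ _ _]mxE /lam; ring.
split.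
- rewrite tY; apply/matrixP => i j; rewrite [LHS]mxE [RHS]mxE -/C.
  rewrite (mulrC (Num.sqrt _)) mulfK; last by rewrite sqrtr_eq0 -ltNge clsize_gt0.
  have [/eqP|C0] := eqVneq (frob C) 0; last by rewrite mulfK.
  by rewrite frob_eq0 => /eqP ->; rewrite mxE !mulr0.
- by rewrite mulr_ge0 ?invr_ge0 /frob ?sqrtr_ge0.
- rewrite -(sqfrob_normalize Y0) -/t tY sqfrob_cluster -frob_sqr -exprMn.
  congr (_ + _); apply: eq_bigr => i _; apply: eq_bigr => k _.
  by rewrite exprMn sqr_sqrtr.
- move=> i; rewrite finset.in_setU negb_or => /andP[mu_i mus_i] k.
  have Ms_i j : Ms i j = 0.
    by rewrite mxE big1 // => k' _; rewrite notin_supp_entry ?mul0r.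
  rewrite /lam /clmean notin_supp_entry // big1 => [|j _]; last exact: Ms_i.
  by rewrite mulr0 subrr !mulr0.
Qed.

End Representation.

Lemma normr_le1_of_sum_sqr (R : realType) (I J : finType) (a : I -> J -> R) i k :
  \sum_i \sum_k a i k ^+ 2 <= 1 -> `|a i k| <= 1.
Proof.
move=> a1; rewrite -(expr_le1 (_ : 0 < 2)%N) ?normr_ge0 // real_normK ?num_real //.
apply: le_trans a1; rewrite (bigD1 i) //= (bigD1 k) //= -addrA ler_wpDr //.
by rewrite addr_ge0 ?sumr_ge0 // => *; rewrite ?sumr_ge0 // => *; apply: sqr_ge0.
Qed.

Section Quantization.
Variables (R : realType) (delta : R) (m : nat).
Hypotheses (delta_gt0 : 0 < delta) (delta_grid : delta^-1 < m.+1%:R).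

Definition code_val (e : entry_code m) : R := (if e.2 then -1 else 1) * (e.1 : nat)%:R.

Definition round (x : R) : entry_code m := (inord (Num.truncn (`|x| / delta)), x < 0).

Lemma truncn_grid x : 0 <= x <= 1 ->
  (Num.truncn (x / delta) < m.+1)%N /\
  delta * (Num.truncn (x / delta))%:R <= x < delta * (Num.truncn (x / delta))%:R + delta.
Proof.
move=> /andP[x0 x1]; have xd0 : 0 <= x / delta by rewrite divr_ge0 // ltW.
split.
  rewrite ltnS truncn_le_nat; apply: le_lt_trans delta_grid.
  by rewrite -[X in _ <= X]mul1r ler_pM2r ?invr_gt0.
have /andP[lo hi] := truncn_itv xd0.
rewrite ler_pdivlMr // mulrC in lo; rewrite -natr1 ltr_pdivrMr // in hi.
by rewrite lo /=; lra.
Qed.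

Lemma round0 : round 0 = (ord0, false).
Proof.
rewrite /round normr0 mul0r truncn0 ltxx; congr pair; apply: val_inj => /=.
by rewrite inordK.
Qed.

Lemma round_err x : `|x| <= 1 -> (x - delta * code_val (round x)) ^+ 2 <= delta ^+ 2.
Proof.
move=> x1; have /truncn_grid[jm /andP[lo hi]] : 0 <= `|x| <= 1 by rewrite normr_ge0.
rewrite /code_val /round /= inordK //.
move: lo hi; set j := (Num.truncn _)%:R => lo hi.
by case: ltP => x0; [rewrite ltr0_norm // in lo hi | rewrite ger0_norm // in lo hi]; nra.
Qed.

Lemma round_mag x : `|x| <= 1 -> ((code_mag (round x)) ^ 2)%:R <= x ^+ 2 / delta ^+ 2.
Proof.
move=> x1; have [jm _] : _ /\ _ := truncn_grid (x := `|x|) (ltac:(by rewrite normr_ge0 x1)).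
rewrite /code_mag /round /= inordK // natrX -(real_normK (num_real x)).
have x0 := divr_ge0 (normr_ge0 x) (ltW delta_gt0).
by rewrite -expr_div_n lerXn2r ?nnegrE // truncn_le.
Qed.

Variables (p n K s : nat) (M : 'M[R]_(p, n)).

Definition round_mx (a : 'I_p -> 'I_K -> R) : mx_code p K m :=
  [ffun i => [ffun k => round (a i k)]].

Lemma admissible_round_mx a (U : {set 'I_p}) :
  (#|U| <= s.*2)%N -> (forall i, i \notin U -> forall k, a i k = 0) ->
  \sum_i \sum_k a i k ^+ 2 <= 1 ->
  admissible_code s (Num.truncn (delta ^+ 2)^-1) (round_mx a).
Proof.
move=> cardU aU a_le1; have zE i k : round_mx a i k = round (a i k) by rewrite !ffunE.
apply/andP; split.
  apply: leq_trans cardU; apply: subset_leq_card; apply/fintype.subsetP => i.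
  rewrite inE; apply: contraR => iU; apply/eqP/ffunP => k.
  by rewrite zE aU // round0 ffunE.
rewrite truncn_ge_nat ?invr_ge0 ?exprn_ge0 ?(ltW delta_gt0) // natr_sum.
apply: (@le_trans _ _ (\sum_i \sum_k a i k ^+ 2 / delta ^+ 2)).
  apply: ler_sum => i _; rewrite natr_sum; apply: ler_sum => k _.
  by rewrite zE round_mag // normr_le1_of_sum_sqr.
rewrite (eq_bigr (fun i => (\sum_k a i k ^+ 2) / delta ^+ 2)) => [|i _]; last first.
  by rewrite mulr_suml.
by rewrite -mulr_suml ler_piMl // invr_ge0 exprn_ge0 // ltW.
Qed.

Definition code := ({ffun 'I_n -> 'I_K} * 'I_m.+1 *
  {z : mx_code p K m | admissible_code s (Num.truncn (delta ^+ 2)^-1) z})%type.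

Definition code_point (c : code) : 'M[R]_(p, n) :=
  cluster_point M c.1.1 (fun i k => delta * code_val (val c.2 i k))
    (delta * (c.1.2 : nat)%:R).

Lemma code_point_approx (f : {ffun 'I_n -> 'I_K}) a tau (U : {set 'I_p}) :
  (#|U| <= s.*2)%N -> (forall i, i \notin U -> forall k, a i k = 0) ->
  0 <= tau -> \sum_i \sum_k a i k ^+ 2 + tau ^+ 2 = 1 ->
  exists c : code, sqfrob (cluster_point M f a tau - code_point c) <=
                   ((s.*2 * K)%:R + 1) * delta ^+ 2.
Proof.
move=> cardU aU tau0 norm1.
have sum_ge0 : 0 <= \sum_i \sum_k a i k ^+ 2.
  by apply: sumr_ge0 => i _; apply: sumr_ge0 => k _; apply: sqr_ge0.
have a_le1 : \sum_i \sum_k a i k ^+ 2 <= 1 by have := sqr_ge0 tau; lra.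
have tau_sq : tau ^+ 2 <= 1 by lra.
have tau1 : tau <= 1 by nra.
have a1 i k : `|a i k| <= 1 by exact: normr_le1_of_sum_sqr a_le1.
pose z := round_mx a; have z_adm := admissible_round_mx cardU aU a_le1.
pose ti : 'I_m.+1 := inord (Num.truncn (tau / delta)).
exists (f, ti, exist _ z z_adm).
have zE i k : z i k = round (a i k) by rewrite !ffunE.
rewrite cluster_pointB; apply: le_trans (sqfrob_cluster_point_le _ _ _ _) _.
rewrite mulrDl mul1r; apply: lerD => /=.
  rewrite (bigID (mem U)) /= [X in _ + X]big1 ?addr0 => [|i iU]; last first.
    by apply: big1 => k _; rewrite zE aU // round0 /code_val !mulr0 subr0 expr0n.
  apply: (@le_trans _ _ (\sum_(i in U) delta ^+ 2 *+ K)).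
    apply: ler_sum => i _; rewrite -[K in X in _ <= X]card_ord -sumr_const.
    by apply: ler_sum => k _; rewrite zE round_err.
  rewrite sumr_const -mulrnA mulnC mulr_natl.
  by apply: ler_wpMn2l; rewrite ?exprn_ge0 ?(ltW delta_gt0) // leq_mul2r cardU orbT.
have /truncn_grid[jm /andP[lo hi]] : 0 <= tau <= 1 by rewrite tau0.
by rewrite /ti inordK //; nra.
Qed.

End Quantization.

Lemma expR_half_le2 (R : realType) : expR (1 / 2 : R) <= 2.
Proof.
have := expR_ge1Dx (- (1 / 2) : R); rewrite expRN.
have := expR_gt0 (1 / 2 : R); set x := expR _ => x0 hx.
have : (1 - 1 / 2) * x <= x^-1 * x by rewrite ler_pM2r.
by rewrite mulVf ?gt_eqF //; lra.
Qed.

Lemma ln_ge_half (R : realType) (w : R) : 2 <= w -> 1 / 2 <= ln w.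
Proof.
move=> w2; rewrite -[X in X <= _]expRK ler_ln ?posrE ?expR_gt0 //; last lra.
exact: le_trans (expR_half_le2 R) w2.
Qed.

Lemma exprn_ge_1Dmul (R : realType) (w : R) k : 2 <= w -> 1 + w * k%:R <= w ^+ k.+1.
Proof.
move=> w2; elim: k => [|k IH]; first by rewrite mulr0 addr0 expr1; lra.
have wX : w <= w ^+ k.+1 by rewrite -[X in X <= _]expr1 ler_eXn2l //; lra.
by rewrite [X in _ <= X]exprS -natr1; nra.
Qed.

Lemma exprn_expR (R : realType) (x : R) k : 0 < x -> x ^+ k = expR (k%:R * ln x).
Proof. by move=> x0; rewrite expRM_natl lnK ?posrE. Qed.

Section GridBounds.
Variables (R : realType) (s K : nat) (eps : R).
Hypotheses (s_gt0 : (0 < s)%N) (K_gt0 : (0 < K)%N) (eps_gt0 : 0 < eps) (eps_le2 : eps <= 2).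

Local Notation D := (s.*2 * K)%N.
Let DE : (D%:R : R) = 2 * s%:R * K%:R.
Proof. by rewrite -muln2 !natrM; ring. Qed.
Let D_ge1 : (1 : R) <= D%:R.
Proof. by rewrite ler1n muln_gt0 double_gt0 s_gt0. Qed.
Local Notation w := (6 / eps).
Let w_ge3 : 3 <= w.
Proof. by rewrite ler_pdivlMr //; have := eps_le2; lra. Qed.
Let lnw_ge_half : 1 / 2 <= ln w.
Proof. by apply: ln_ge_half; have := w_ge3; lra. Qed.

Definition grid_step : R := eps / (4 * Num.sqrt (s.*2 * K)%:R).

Local Notation m := (Num.truncn grid_step^-1).
Local Notation r := (Num.truncn (grid_step ^+ 2)^-1).

Let sqrtD_gt0 : 0 < Num.sqrt (D%:R : R).
Proof. by rewrite sqrtr_gt0 (lt_le_trans ltr01 D_ge1). Qed.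

Lemma grid_step_gt0 : 0 < grid_step.
Proof. by rewrite divr_gt0 // mulr_gt0. Qed.

Lemma grid_step_sqr : grid_step ^+ 2 = eps ^+ 2 / (16 * (s.*2 * K)%:R).
Proof.
rewrite /grid_step expr_div_n exprMn sqr_sqrtr ?ler0n //; field.
by rewrite !pnatr_eq0 -!lt0n K_gt0 double_gt0.
Qed.

Lemma grid_size_le : (m.+1%:R : R) <= expR (D.+1%:R * ln w).
Proof.
rewrite -exprn_expR ?(lt_le_trans _ w_ge3) //.
apply: le_trans (exprn_ge_1Dmul _ (_ : 2 <= w)); last by have := w_ge3; lra.
rewrite -natr1 addrC lerD2l.
have m_le : (m%:R : R) <= grid_step^-1 by rewrite truncn_le invr_ge0 ltW ?grid_step_gt0.
have sqrtD_le : Num.sqrt (D%:R : R) <= D%:R.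
  rewrite -{2}(sqr_sqrtr (ler0n _ D)) expr2 ler_peMr // -[X in X <= _]sqrtr1.
  by rewrite ler_sqrt.
apply: (le_trans m_le); rewrite /grid_step invf_div mulrAC.
apply: ler_pM; rewrite ?divr_ge0 ?sqrtr_ge0 ?(ltW eps_gt0) //.
by rewrite ler_pM2r ?invr_gt0 //; lra.
Qed.

Local Notation q := (1 + eps ^+ 2 / 32)^-1.
Let q_gt0 : 0 < q.
Proof. by rewrite invr_gt0 ltr_wpDr ?divr_ge0 ?exprn_ge0 ?ltW. Qed.
Let q_lt1 : q < 1.
Proof.
by rewrite invf_lt1 ?ltrDl ?divr_gt0 ?exprn_gt0 // ltr_wpDr ?divr_ge0 ?exprn_ge0 ?ltW.
Qed.

Lemma theta_sum_le_pow : theta_sum m q <= w ^+ 4.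
Proof.
have E0 : 0 < eps ^+ 2 by rewrite exprn_gt0.
have E4 : eps ^+ 2 <= 4 by have := eps_gt0; have := eps_le2; nra.
apply: (le_trans (theta_sum_le _ _)); first by rewrite ltW ?q_gt0 ?q_lt1.
have -> : 2 / (1 - q) = (64 + 2 * eps ^+ 2) / eps ^+ 2.
  by field; rewrite ?gt_eqF //; lra.
have -> : w ^+ 4 = 1296 / (eps ^+ 2 * eps ^+ 2) by field; rewrite gt_eqF.
rewrite ler_pdivlMr ?mulr_gt0 //.
have -> : (64 + 2 * eps ^+ 2) / eps ^+ 2 * (eps ^+ 2 * eps ^+ 2) =
          (64 + 2 * eps ^+ 2) * eps ^+ 2 by field; rewrite gt_eqF.
nra.
Qed.

(* [q ^+ r >= exp (- r eps^2 / 32)] and [r <= grid_step^-2 = 32 s K / eps^2]. *)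
Lemma radius_weight_le : (q ^+ r)^-1 <= expR (s%:R * K%:R).
Proof.
rewrite exprVn invrK; set al := eps ^+ 2 / 32.
apply: (@le_trans _ _ (expR al ^+ r)).
  by apply: lerXn2r; rewrite ?nnegrE ?expR_ge0 ?expR_ge1Dx // addr_ge0 ?divr_ge0 ?exprn_ge0 ?ltW.
rewrite -expRM_natl ler_expR.
have r_le : (r%:R : R) <= (grid_step ^+ 2)^-1.
  by rewrite truncn_le invr_ge0 exprn_ge0 // ltW ?grid_step_gt0.
have -> : s%:R * K%:R = (grid_step ^+ 2)^-1 * al.
  by rewrite grid_step_sqr invf_div DE /al; field; rewrite gt_eqF.
by rewrite ler_wpM2r // divr_ge0 ?exprn_ge0 ?ltW.
Qed.

Lemma grid_error_le : ((s.*2 * K)%:R + 1) * grid_step ^+ 2 <= eps ^+ 2 / 4.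
Proof.
have D_gt0 : (0 : R) < D%:R by exact: lt_le_trans ltr01 D_ge1.
have -> : (D%:R + 1) * grid_step ^+ 2 =
    eps ^+ 2 / 4 - eps ^+ 2 * (3 * D%:R - 1) / (16 * D%:R).
  by rewrite grid_step_sqr; field; rewrite !pnatr_eq0 -!lt0n K_gt0 double_gt0.
rewrite lerBlDr lerDl; apply: divr_ge0; last by rewrite mulr_ge0 // ltW.
by rewrite mulr_ge0 ?sqr_ge0 //; have := D_ge1; lra.
Qed.

Lemma card_admissible_le_expR p : (s <= p)%N ->
  #|[pred z : mx_code p K m | admissible_code s r z]|%:R <=
    expR (s%:R + s%:R * K%:R + 2 * s%:R * ln (p%:R / s%:R) + 8 * (s%:R * K%:R) * ln w).
Proof.
move=> sp; set th := theta_sum m q.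
have th_ge1 : 1 <= th ^+ K by rewrite exprn_ege1 // theta_sum_ge1 ?ltW.
have s_pos : (0 : R) < s%:R by rewrite ltr0n.
have p_pos : (0 : R) < p%:R by rewrite ltr0n (leq_trans s_gt0).
set y := s%:R / (p%:R * th ^+ K).
have y_gt0 : 0 < y by rewrite divr_gt0 // mulr_gt0 // (lt_le_trans ltr01).
have y_le1 : y <= 1.
  rewrite /y ler_pdivrMr; last by rewrite mulr_gt0 // (lt_le_trans ltr01).
  have : (s%:R : R) <= p%:R by rewrite ler_nat.
  have : (p%:R : R) <= p%:R * th ^+ K by rewrite ler_peMr ?ler0n.
  lra.
have th_ge0 : 0 <= th by rewrite (le_trans ler01) ?theta_sum_ge1 ?ltW.
have row_bound : (1 + y * th ^+ K) ^+ p <= expR s%:R.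
  have -> : y * th ^+ K = s%:R / p%:R.
    by rewrite /y invfM mulrA divfK // gt_eqF // (lt_le_trans ltr01).
  have -> : expR (s%:R : R) = expR (s%:R / p%:R) ^+ p.
    by rewrite -expRM_natl mulrC divfK // gt_eqF.
  by apply: lerXn2r; rewrite ?nnegrE ?expR_ge0 ?expR_ge1Dx // addr_ge0 ?divr_ge0 ?ler0n.
have sparsity_bound :
    (y ^+ s.*2)^-1 <= expR (2 * s%:R * ln (p%:R / s%:R) + 8 * (s%:R * K%:R) * ln w).
  rewrite -exprVn invf_div mulrAC exprMn -exprM expRD.
  have -> : 2 * s%:R = (s.*2)%:R :> R by rewrite -muln2 natrM mulrC.
  have -> : 8 * (s%:R * K%:R) = (4 * (K * s.*2))%:R :> R by rewrite -muln2 !natrM; ring.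
  rewrite -!exprn_expR ?divr_gt0 ?(lt_le_trans _ w_ge3) // [w ^+ _]exprM.
  apply: ler_wpM2l; first by rewrite exprn_ge0 // divr_ge0 ?ltW.
  have w_ge0 : 0 <= w by apply: le_trans w_ge3.
  by apply: lerXn2r; rewrite ?nnegrE ?exprn_ge0 //; apply: theta_sum_le_pow.
apply: (le_trans (card_admissible_code_le p K m s r q_gt0 (ltW q_lt1) y_gt0 y_le1)).
rewrite (invfM (q ^+ r)) [X in X <= _]mulrA -addrA expRD (expRD s%:R).
have base_ge0 : 0 <= 1 + y * th ^+ K.
  by have := mulr_ge0 (ltW y_gt0) (exprn_ge0 K th_ge0); lra.
apply: ler_pM; rewrite ?invr_ge0 ?exprn_ge0 ?(ltW y_gt0) //.
  by rewrite divr_ge0 ?exprn_ge0 ?(ltW q_gt0).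
apply: ler_pM; rewrite ?invr_ge0 ?exprn_ge0 ?(ltW q_gt0) //; exact: radius_weight_le.
Qed.

Lemma card_code_le n p : (2 <= n)%N -> (s <= p)%N ->
  #|{: code grid_step m p n K s}|%:R <=
    expR (15 * (n%:R * ln K%:R + s%:R * ln (p%:R / s%:R)
                + s%:R * K%:R * ln n%:R + s%:R * K%:R * ln w)).
Proof.
move=> n2 sp; rewrite !card_prod card_ffun !card_ord card_sig !natrM natrX.
have -> : (K%:R : R) ^+ n = expR (n%:R * ln K%:R) by rewrite exprn_expR // ltr0n.
apply: (@le_trans _ _ (expR (n%:R * ln K%:R) * expR (D.+1%:R * ln w) *
  expR (s%:R + s%:R * K%:R + 2 * s%:R * ln (p%:R / s%:R) + 8 * (s%:R * K%:R) * ln w))).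
  apply: ler_pM; rewrite ?mulr_ge0 ?expR_ge0 ?ler0n ?card_admissible_le_expR //.
  by apply: ler_pM; rewrite ?expR_ge0 ?ler0n ?grid_size_le.
rewrite -!expRD ler_expR -natr1 DE.
have lnK_ge0 : 0 <= ln (K%:R : R) by rewrite ln_ge0 // ler1n.
have lnps_ge0 : 0 <= ln (p%:R / s%:R : R).
  by rewrite ln_ge0 // ler_pdivlMr ?ltr0n // mul1r ler_nat.
have lnn_ge0 : 0 <= ln (n%:R : R) by rewrite ln_ge0 // ler1n ltnW.
have sK_ge1 : 1 <= s%:R * K%:R :> R by rewrite -natrM ler1n muln_gt0 s_gt0.
have s_le_sK : s%:R <= s%:R * K%:R :> R by rewrite ler_peMr ?ler0n // ler1n.
(* As [ln w >= 1/2], the terms [s], [s K] and [ln w] are absorbed by [s K ln w]. *)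
have := mulr_ge0 (ler0n R n) lnK_ge0; have := mulr_ge0 (ler0n R s) lnps_ge0.
have := mulr_ge0 (ler0n R (s * K)) lnn_ge0; rewrite natrM.
have : s%:R * K%:R * (1 / 2) <= s%:R * K%:R * ln w.
  by apply: ler_wpM2l; [rewrite mulr_ge0 ?ler0n | exact: lnw_ge_half].
have : ln w <= s%:R * K%:R * ln w by rewrite ler_peMl // (le_trans _ lnw_ge_half).
have := lnw_ge_half; lra.
Qed.

End GridBounds.

Theorem mainTheorem4 (R : realType) (c0 C0 : R) (hc0 : 0 < c0) (hC0 : 0 < C0) :
  exists2 C : R, 0 < C &
  forall (n p K s : nat), (2 <= n)%N -> (2 <= K)%N -> (1 <= s)%N -> (s <= p)%N ->
  forall (mus : 'M[R]_(p, K)) (Ls : 'M[R]_(n, K)),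
    is_assign Ls ->
    (#|supp mus| <= s)%N ->
    (forall k k' : 'I_K, k != k' -> c0 <= coldist mus k k') ->
    frob (mus *m Ls^T) ^+ 2 <= C0 * s%:R * n%:R ->
  forall eps : R, 0 < eps -> eps <= 2 ->
    (covering_number eps (ThetaK s mus Ls) <=
     (expR (C * (n%:R * ln K%:R + s%:R * ln (p%:R / s%:R)
                 + s%:R * K%:R * ln n%:R + s%:R * K%:R * ln (6 / eps))))%:E)%E.
Proof.
exists 15 => // n p K s n2 K2 s_gt0 sp mus Ls _ mus_supp _ _ eps eps_gt0 eps_le2.
have K_gt0 : (0 < K)%N by exact: ltnW.
set delta := grid_step s K eps.
have delta_grid : delta^-1 < (Num.truncn delta^-1).+1%:R by exact: truncnS_gt.
apply: le_trans (covering_number_le_card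
  (g := code_point (m := Num.truncn delta^-1) (s := s) (mus *m Ls^T)) (ltW eps_gt0) _) _.
  move=> _ [mu [L [mu_supp /choice [f0 Lf0] + ->]]]; rewrite -subr_eq0 => Y0.
  pose f : {ffun 'I_n -> 'I_K} := [ffun j => f0 j].
  have Lf j k : L j k = (k == f j)%:R by rewrite ffunE Lf0.
  have [a [tau [-> tau0 norm1 a_supp]]] := normalized_diff_cluster_point Lf Y0.
  have suppU : (#|supp mu :|: supp mus| <= s.*2)%N.
    by apply: leq_trans (leq_card_setU _ _).1 _; rewrite -addnn leq_add.
  have [c c_approx] := code_point_approx (grid_step_gt0 s_gt0 K_gt0 eps_gt0) delta_grid
    (mus *m Ls^T) f suppU a_supp tau0 norm1.
  by exists c; apply: le_trans c_approx (grid_error_le eps s_gt0 K_gt0).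
by rewrite lee_fin card_code_le.
Qed.
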